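(* Let $A,B$ be real numbers with $A>2B>1$. Then the equation $x=A+B\log(1+x\log x)$ has a unique positive root $x^*=x^*(A,B)$, and it satisfies $$A+B\log(1+A\log A)\ <\ x^*\ <\ A+B\log(1+A\log A)\Bigl(1+\frac{2B}{A-2B}\Bigr).$$ *)

From Stdlib Require Import Reals.

From Stdlib Require Import Reals Ranalysis5 Lra Psatz.
Open Scope R_scope.

(* Write [phi x = ln (1 + x ln x)].  For [0 < x < y] one has
   [1 + y ln y < (1 + x ln x) (y/x)^2], hence [phi y - phi x < 2 (y - x) / x]:
   beyond [2B] the increments of [B phi] are smaller than those of [x], which
   gives uniqueness.  Roots in [(0, 1]] are excluded by [phi x >= 2 (x - 1)]
   there, so every root exceeds [A].  Existence is the intermediate value
   theorem for [x - A - B phi x] on [[L, U]], the two claimed bounds: it is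
   negative at [L = A + B phi A] because [phi] increases on [[1, oo)], and the
   increment bound between [A] and [U] is exactly what makes it positive at [U]. *)

Lemma ln_le_sub_1 (x : R) : 0 < x -> ln x <= x - 1.
Proof.
  intros hx. pose proof (exp_ineq1_le (ln x)) as h. rewrite exp_ln in h; lra.
Qed.

Lemma ln_ge_1_sub_inv (x : R) : 0 < x -> 1 - / x <= ln x.
Proof.
  intros hx. pose proof (ln_le_sub_1 (/ x) (Rinv_0_lt_compat x hx)) as h.
  rewrite ln_Rinv in h; lra.
Qed.

Lemma ln_pos (x : R) : 1 < x -> 0 < ln x.
Proof. intros hx. rewrite <- ln_1. apply ln_increasing; lra. Qed.

Lemma xlnx_ge_sub_1 (x : R) : 0 < x -> x - 1 <= x * ln x.
Proof.
  intros hx. pose proof (ln_ge_1_sub_inv x hx) as h.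
  replace (x - 1) with (x * (1 - / x)) by (field; lra).
  apply Rmult_le_compat_l; lra.
Qed.

(* [x ln x = x ln (2x) - x ln 2 >= x - 1/2 - x ln 2], and [ln 2 <= 1]. *)
Lemma xlnx_ge_neg_half (x : R) : 0 < x -> - / 2 <= x * ln x.
Proof.
  intros hx.
  pose proof (xlnx_ge_sub_1 (2 * x) ltac:(lra)) as h2x.
  pose proof (ln_le_sub_1 2 ltac:(lra)) as hln2.
  rewrite ln_mult in h2x by lra.
  nra.
Qed.

Definition ln1p_xlnx (x : R) : R := ln (1 + x * ln x).

Lemma one_add_xlnx_pos (x : R) : 0 < x -> 0 < 1 + x * ln x.
Proof. intros hx. pose proof (xlnx_ge_neg_half x hx); lra. Qed.

Lemma continuity_pt_ln (x : R) : 0 < x -> continuity_pt ln x.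
Proof.
  intros hx. apply derivable_continuous_pt. exists (/ x).
  exact (derivable_pt_lim_ln x hx).
Qed.

Lemma continuity_pt_ln1p_xlnx (x : R) : 0 < x -> continuity_pt ln1p_xlnx x.
Proof.
  intros hx. unfold ln1p_xlnx.
  apply (continuity_pt_comp (fun t => 1 + t * ln t) ln).
  - apply continuity_pt_plus; [apply continuity_pt_const; intros ? ?; reflexivity |].
    apply continuity_pt_mult; [apply derivable_continuous_pt, derivable_pt_id |].
    exact (continuity_pt_ln x hx).
  - exact (continuity_pt_ln _ (one_add_xlnx_pos x hx)).
Qed.

Lemma ln1p_xlnx_increasing (x y : R) :
  1 <= x -> x < y -> ln1p_xlnx x < ln1p_xlnx y.
Proof.
  intros hx hxy. unfold ln1p_xlnx.
  apply ln_increasing; [apply one_add_xlnx_pos; lra |].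
  pose proof (ln_increasing x y ltac:(lra) hxy).
  pose proof (ln_pos y ltac:(lra)).
  nra.
Qed.

Lemma ln1p_xlnx_pos (x : R) : 1 < x -> 0 < ln1p_xlnx x.
Proof.
  intros hx. unfold ln1p_xlnx. apply ln_pos.
  pose proof (ln_pos x hx). nra.
Qed.

(* [ln (1 + p) >= p / (1 + p) >= 2 p] for [p = x ln x] in [[-1/2, 0]]. *)
Lemma ln1p_xlnx_ge (x : R) : 0 < x <= 1 -> 2 * (x - 1) <= ln1p_xlnx x.
Proof.
  intros [hx0 hx1]. unfold ln1p_xlnx.
  set (p := x * ln x).
  assert (hp_le : p <= 0).
  { pose proof (ln_le_sub_1 x hx0). unfold p. nra. }
  assert (hp_ge : - / 2 <= p) by exact (xlnx_ge_neg_half x hx0).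
  assert (hxp : x - 1 <= p) by exact (xlnx_ge_sub_1 x hx0).
  pose proof (ln_ge_1_sub_inv (1 + p) ltac:(lra)) as hln.
  replace (1 - / (1 + p)) with (p / (1 + p)) in hln by (field; lra).
  assert (2 * p <= p / (1 + p)).
  { apply (Rmult_le_reg_r (1 + p)); [lra |].
    replace (p / (1 + p) * (1 + p)) with p by (field; lra). nra. }
  lra.
Qed.

Lemma one_add_xlnx_lt (x y : R) :
  0 < x -> x < y -> 1 + y * ln y < (1 + x * ln x) * (y / x) ^ 2.
Proof.
  intros hx hxy.
  set (u := y / x).
  assert (hy : y = u * x) by (unfold u; field; lra).
  assert (hu : 1 < u).
  { apply (Rmult_lt_reg_r x); [lra |]. lra. }
  assert (hlny : ln y = ln x + ln u) by (rewrite hy, ln_mult; lra).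
  pose proof (ln_le_sub_1 u ltac:(lra)) as hlnu.
  pose proof (xlnx_ge_sub_1 x hx) as hxlnx.
  rewrite hlny, hy.
  (* [(1 + x ln x) u^2 - (1 + u x (ln x + u - 1)) = (u - 1) (1 + u (1 + x ln x - x))] *)
  assert (u * x * (ln x + ln u) <= u * x * (ln x + (u - 1))).
  { apply Rmult_le_compat_l; nra. }
  assert (0 < (u - 1) * (1 + u * (1 + x * ln x - x))).
  { apply Rmult_lt_0_compat; nra. }
  nra.
Qed.

Lemma ln1p_xlnx_sub_lt (x y : R) :
  0 < x -> x < y -> ln1p_xlnx y - ln1p_xlnx x < 2 * ((y - x) / x).
Proof.
  intros hx hxy. unfold ln1p_xlnx.
  pose proof (one_add_xlnx_pos x hx) as hpx.
  assert (hu : 0 < y / x) by (apply Rdiv_lt_0_compat; lra).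
  pose proof (ln_increasing _ _ (one_add_xlnx_pos y ltac:(lra)) (one_add_xlnx_lt x y hx hxy)) as h.
  rewrite ln_mult, ln_pow in h by (try apply pow_lt; lra).
  pose proof (ln_le_sub_1 (y / x) hu).
  replace ((y - x) / x) with (y / x - 1) by (field; lra).
  simpl in h. lra.
Qed.

Lemma ln1p_xlnx_contraction (B x y : R) :
  0 < B -> 2 * B <= x -> x < y -> B * (ln1p_xlnx y - ln1p_xlnx x) < y - x.
Proof.
  intros hB hx hxy.
  pose proof (ln1p_xlnx_sub_lt x y ltac:(lra) hxy) as h.
  assert (hq : (y - x) / x * x = y - x) by (field; lra).
  assert (0 < (y - x) / x) by (apply Rdiv_lt_0_compat; lra).
  nra.
Qed.

Section FixedPoint.

Variables A B : R.
Hypothesis hAB : A > 2 * B.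
Hypothesis hB : 2 * B > 1.

Lemma fixed_point_gt_1 (r : R) : 0 < r -> r = A + B * ln1p_xlnx r -> 1 < r.
Proof.
  intros hr e. destruct (Rle_lt_dec r 1) as [hr1 | hr1]; [exfalso | exact hr1].
  pose proof (ln1p_xlnx_ge r (conj hr hr1)).
  nra.
Qed.

Lemma fixed_point_gt (r : R) : 0 < r -> r = A + B * ln1p_xlnx r -> A < r.
Proof.
  intros hr e. pose proof (ln1p_xlnx_pos r (fixed_point_gt_1 r hr e)). nra.
Qed.

Lemma fixed_point_unique (r s : R) :
  0 < r -> r = A + B * ln1p_xlnx r ->
  0 < s -> s = A + B * ln1p_xlnx s -> r = s.
Proof.
  intros hr er hs es.
  pose proof (fixed_point_gt r hr er). pose proof (fixed_point_gt s hs es).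
  destruct (Rtotal_order r s) as [h | [h | h]]; [exfalso | exact h | exfalso].
  - pose proof (ln1p_xlnx_contraction B r s ltac:(lra) ltac:(lra) h). lra.
  - pose proof (ln1p_xlnx_contraction B s r ltac:(lra) ltac:(lra) h). lra.
Qed.

Lemma fixed_point_exists_between :
  exists r, A + B * ln1p_xlnx A < r < A + B * ln1p_xlnx A * (1 + 2 * B / (A - 2 * B))
            /\ r = A + B * ln1p_xlnx r.
Proof.
  remember (A + B * ln1p_xlnx A) as L eqn:hL.
  remember (A + B * ln1p_xlnx A * (1 + 2 * B / (A - 2 * B))) as U eqn:hU.
  set (g := fun x => x - (A + B * ln1p_xlnx x)).
  pose proof (ln1p_xlnx_pos A ltac:(lra)) as hphiA.
  assert (hAL : A < L) by nra.
  assert (hUL : L < U).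
  { assert (0 < B * ln1p_xlnx A * (2 * B / (A - 2 * B))).
    { apply Rmult_lt_0_compat; [nra | apply Rdiv_lt_0_compat; lra]. }
    nra. }
  assert (hgL : g L < 0).
  { unfold g. pose proof (ln1p_xlnx_increasing A L ltac:(lra) hAL). nra. }
  assert (hgU : 0 < g U).
  { unfold g. pose proof (ln1p_xlnx_sub_lt A U ltac:(lra) ltac:(lra)) as hsub.
    (* [U] is chosen so that [U - L = 2 B (U - A) / A]. *)
    assert (hUL_eq : U - L = 2 * B * ((U - A) / A)) by (rewrite hU, hL; field; lra).
    nra. }
  assert (hcont : forall x, L <= x <= U -> continuity_pt g x).
  { intros x hx. unfold g.
    apply continuity_pt_minus; [apply derivable_continuous_pt, derivable_pt_id |].
    apply continuity_pt_plus; [apply continuity_pt_const; intros ? ?; reflexivity |].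
    apply continuity_pt_mult; [apply continuity_pt_const; intros ? ?; reflexivity |].
    apply continuity_pt_ln1p_xlnx; lra. }
  destruct (IVT_interv g L U hcont hUL hgL hgU) as [r [hr hgr]].
  unfold g in hgL, hgU, hgr.
  exists r. split; [split | lra].
  - destruct (proj1 hr) as [h | h]; [exact h | subst r; lra].
  - destruct (proj2 hr) as [h | h]; [exact h | subst r; lra].
Qed.

End FixedPoint.

Theorem lemma3 (A B : R) (hAB : A > 2 * B) (hB : 2 * B > 1) :
  exists xs : R,
    (0 < xs /\ xs = A + B * ln (1 + xs * ln xs)) /\
    (forall y : R, 0 < y -> y = A + B * ln (1 + y * ln y) -> y = xs) /\
    A + B * ln (1 + A * ln A) < xs /\
    xs < A + B * ln (1 + A * ln A) * (1 + 2 * B / (A - 2 * B)).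
Proof.
  destruct (fixed_point_exists_between A B hAB hB) as [xs [[hL hU] exs]].
  pose proof (ln1p_xlnx_pos A ltac:(lra)).
  assert (hxs : 0 < xs) by nra.
  exists xs. split; [| split; [| split]].
  - split; assumption.
  - intros y hy ey. exact (fixed_point_unique A B hAB hB y xs hy ey hxs exs).
  - exact hL.
  - exact hU.
Qed.
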